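(* Let $X$ be a Banach lattice of (equivalence classes of) real valued functions on a $\sigma$-finite measure space $(\Omega,\Sigma,\mu)$, with $X\subseteq L_1(\Omega,\Sigma,\mu)+L_\infty(\Omega,\Sigma,\mu)$, and let $T:X\to X$ be a linear operator. Put $\Sigma_T=\{A\subseteq\Omega:\ \exists f\in X \text{ with } \operatorname{supp}(Tf)=A\}$. Then: (1) if $A,B\in\Sigma_T$, then $A\cup B\in\Sigma_T$; (2) if $\{A_j\}_{j\in\mathbb{N}}\subseteq\Sigma_T$ is a family of mutually disjoint sets, then $\bigcup_{j=1}^\infty A_j\in\Sigma_T$.
   Context: For a function $f$, $\operatorname{supp} f$ denotes its support, i.e. the minimal set outside of which $f=0$ a.e. All set relations (equality, inclusion, disjointness) are understood modulo sets of measure zero. *)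

From HB Require Import structures.
From mathcomp Require Import all_boot all_order all_algebra.
From mathcomp Require Import all_classical all_reals all_analysis.
Set Implicit Arguments. Unset Strict Implicit. Unset Printing Implicit Defensive.
Import Order.TTheory GRing.Theory Num.Theory.
Local Open Scope classical_set_scope.
Local Open Scope ring_scope.

Section Defs.
Context {d : measure_display} {Om : measurableType d} {R : realType}.

(* Elements of X are represented by measurable real functions on Om;
   X is closed under a.e. equality, so it is really a set of equivalence classes. *)

Definition in_L1_plus_Linf (mu : {measure set Om -> \bar R}) (f : Om -> R) : Prop :=
  exists g h : Om -> R,
    [/\ mu.-integrable setT (EFin \o g),
        measurable_fun setT h,
        (exists M : R, {ae mu, forall x, `|h x| <= M})
      & forall x, f x = g x + h x].

Record BanachFunctionLattice (mu : {measure set Om -> \bar R})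
    (X : set (Om -> R)) (nrm : (Om -> R) -> R) : Prop := {
  bfl_meas : forall f, X f -> measurable_fun setT f;
  bfl_ae_closed : forall f g, X f -> measurable_fun setT g ->
      f = g %[ae mu] -> X g;
  bfl_zero : X (fun _ => 0);
  bfl_add : forall f g, X f -> X g -> X (fun x => f x + g x);
  bfl_scale : forall (a : R) f, X f -> X (fun x => a * f x);
  bfl_max : forall f g, X f -> X g -> X (fun x => Num.max (f x) (g x));
  bfl_nrm_ae : forall f g, X f -> X g -> f = g %[ae mu] -> nrm f = nrm g;
  bfl_nrm_triangle : forall f g, X f -> X g ->
      nrm (fun x => f x + g x) <= nrm f + nrm g;
  bfl_nrm_scale : forall (a : R) f, X f -> nrm (fun x => a * f x) = `|a| * nrm f;
  bfl_nrm_def : forall f, X f -> (nrm f = 0 <-> f = (fun _ => 0) %[ae mu]);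
  bfl_nrm_lattice : forall f g, X f -> X g ->
      {ae mu, forall x, `|f x| <= `|g x|} -> nrm f <= nrm g;
  bfl_complete : forall u : nat -> Om -> R, (forall n, X (u n)) ->
      (forall e : R, 0 < e -> exists N, forall m n, (N <= m)%N -> (N <= n)%N ->
          nrm (fun x => u m x - u n x) < e) ->
      exists2 f, X f & forall e : R, 0 < e -> exists N, forall n, (N <= n)%N ->
          nrm (fun x => u n x - f x) < e;
  bfl_L1Linf : forall f, X f -> in_L1_plus_Linf mu f
}.

Definition bounded_linear_op (mu : {measure set Om -> \bar R})
    (X : set (Om -> R)) (nrm : (Om -> R) -> R) (Op : (Om -> R) -> (Om -> R)) : Prop :=
  [/\ forall f, X f -> X (Op f),
      forall f g, X f -> X g -> f = g %[ae mu] -> Op f = Op g %[ae mu],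
      forall f g, X f -> X g -> Op (fun x => f x + g x) = (fun x => Op f x + Op g x) %[ae mu],
      forall (a : R) f, X f -> Op (fun x => a * f x) = (fun x => a * Op f x) %[ae mu]
    & exists C : R, forall f, X f -> nrm (Op f) <= C * nrm f].

Definition ae_set_eq (mu : {measure set Om -> \bar R}) (A B : set Om) : Prop :=
  mu.-negligible ((A `\` B) `|` (B `\` A)).

Definition is_supp (mu : {measure set Om -> \bar R}) (f : Om -> R) (A : set Om) : Prop :=
  ae_set_eq mu A [set x | f x != 0].

Definition SigmaT (mu : {measure set Om -> \bar R}) (X : set (Om -> R))
    (Op : (Om -> R) -> (Om -> R)) : set (set Om) :=
  [set A | exists2 f, X f & is_supp mu (Op f) A].

Definition ae_disjoint (mu : {measure set Om -> \bar R}) (A B : set Om) : Prop :=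
  mu.-negligible (A `&` B).

End Defs.

From HB Require Import structures.
From mathcomp Require Import all_boot all_order all_algebra.
From mathcomp Require Import all_classical all_reals all_analysis.
Import Order.TTheory GRing.Theory Num.Theory.
Local Open Scope classical_set_scope.
Local Open Scope ring_scope.
Import numFieldNormedType.Exports.
Set Implicit Arguments. Unset Strict Implicit. Unset Printing Implicit Defensive.

(* (1) If supp Tf = A and supp Tg = B, then T(f + c g) = Tf + c Tg has support
   A \/ B unless Tf + c Tg cancels on a non-null part of {Tg <> 0}.  These
   cancellation sets are disjoint for distinct c, so by sigma-finiteness only
   countably many c are bad, and an uncountable field of scalars leaves a good c.
   (2) Rescale the f_j so that ||c_j f_j|| <= 2^-j and let h = sum_j c_j f_j.
   The remainders T(h - sum_(j<n) c_j f_j) tend to 0 in norm, so a subsequence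
   tends to 0 a.e.; at a.e. x of A_k they are eventually Th x - c_k Tf_k x
   (the A_j are a.e. disjoint), and off the union they are Th x: hence
   supp Th = \/_j A_j. *)

Section disjoint_family.
Context d (T : measurableType d) (R : realType) (mu : {measure set T -> \bar R}).
Context (I : pointedType) (E : I -> set T).
Hypothesis mE : forall i, measurable (E i).
Hypothesis E_disj : forall i j x, E i x -> E j x -> i = j.

Lemma disjoint_family_heavy_finite (F : set T) (e : R) :
  measurable F -> (mu F < +oo)%E -> 0 < e ->
  finite_set [set i | (e%:E < mu (F `&` E i))%E].
Proof.
move=> mF Ffin e0; apply: contrapT => /infiniteP/pcard_leP/injfunPex[q qheavy qinj].
have mFEq k : measurable (F `&` E (q k)) by exact: measurableI.
have fin_muF : mu F \is a fin_num by rewrite ge0_fin_numE.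
pose N := Num.bound (fine (mu F) / e).
have muF_lt : (mu F < (e *+ N)%:E)%E.
  rewrite -(fineK fin_muF) lte_fin -mulr_natr -ltr_pdivrMl // mulrC.
  exact: archi_boundP (divr_ge0 (fine_ge0 (measure_ge0 _ _)) (ltW e0)).
have : (mu (\bigcup_k (F `&` E (q k))) <= mu F)%E.
  by apply: le_measure; rewrite ?inE//; [exact: bigcup_measurable | exact: bigcup_sub].
rewrite leNgt => /negP; apply; rewrite measure_bigcup//; last first.
  move=> i j _ _ [x [[_ Ei] [_ Ej]]]; apply: qinj; rewrite ?inE//; exact: E_disj Ei Ej.
apply: (lt_le_trans muF_lt); apply: le_trans (nneseries_lim_ge N _) => //.
have -> : e *+ N = \sum_(0 <= k < N) e by rewrite sumr_const_nat subn0.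
under [X in (_ <= X)%E]eq_bigl do rewrite in_setT.
by rewrite -sumEFin; apply: lee_sum => k _; apply/ltW; exact: qheavy.
Qed.

Lemma disjoint_family_positive_countable (F : set T) :
  measurable F -> (mu F < +oo)%E -> countable [set i | (0 < mu (F `&` E i))%E].
Proof.
move=> mF Ffin.
have -> : [set i | (0 < mu (F `&` E i))%E] =
    \bigcup_n [set i | ((n.+1%:R)^-1%:E < mu (F `&` E i))%E].
  apply/seteqP; split=> [i /= muFEi_gt0|i [n _]]; last exact/lt_trans.
  have muFEi_fin : mu (F `&` E i) \is a fin_num.
    rewrite ge0_fin_numE//; apply: le_lt_trans Ffin.
    by apply: le_measure; rewrite ?inE//; exact: measurableI.
  have /ltr_add_invr[n] : 0 < fine (mu (F `&` E i)).
    by apply: fine_gt0; rewrite muFEi_gt0 -ge0_fin_numE ?ltW.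
  by rewrite add0r => n_lt; exists n => //=; rewrite -(fineK muFEi_fin) lte_fin.
apply: bigcup_countable => // n _; apply: finite_set_countable.
exact: disjoint_family_heavy_finite.
Qed.

Lemma sigma_finite_disjoint_family_negligible :
  sigma_finite setT mu -> ~ countable [set: I] -> exists i, mu.-negligible (E i).
Proof.
move=> [F FT mF] Inc.
have Fcount : countable (\bigcup_n [set i | (0 < mu (F n `&` E i))%E]).
  by apply: bigcup_countable => // n _; apply: disjoint_family_positive_countable; case: (mF n).
have [i /= Fi] : exists i, ~ (\bigcup_n [set i | (0 < mu (F n `&` E i))%E]) i.
  by apply/setTPn/eqP => FIT; apply: Inc; rewrite -FIT.
exists i; rewrite -[E i]setTI FT setI_bigcupl; apply: negligible_bigcup => n.
have [mFn _] := mF n; apply/negligibleP; first exact: measurableI.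
by apply/eqP; rewrite eq_le measure_ge0 andbT leNgt; apply: contra_notN Fi => ?; exists n.
Qed.

End disjoint_family.

Lemma real_not_countable (R : realType) : ~ countable [set: R].
Proof.
move=> /countable_lebesgue_measure0.
by rewrite -set_itvNyy lebesgue_measure_itv.
Qed.

Lemma exists_negligible_cancellation d (T : measurableType d) (R : realType)
    (mu : {measure set T -> \bar R}) (phi psi : T -> R) :
  sigma_finite setT mu -> measurable_fun setT phi -> measurable_fun setT psi ->
  exists c : R, mu.-negligible [set x | psi x != 0 /\ phi x + c * psi x = 0].
Proof.
move=> mu_sf mphi mpsi.
pose E c := [set x | psi x != 0 /\ phi x + c * psi x = 0].
have mE c : measurable (E c).
  have -> : E c = (setT `&` psi @^-1` [set~ 0]) `&`
      (setT `&` (fun x => phi x + c * psi x) @^-1` [set 0]).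
    apply/seteqP; split=> x /=; first by move=> [/eqP psix0 Ex].
    by move=> [[_ psix0] [_ Ex]]; split=> //; apply/eqP.
  apply: measurableI; first exact/mpsi/measurableC.
  by apply: measurable_realfun.measurable_funD => //; exact: measurable_realfun.measurable_funM.
have E_disj c c' x : E c x -> E c' x -> c = c'.
  by move=> [psix0 Ec] [_ Ec']; apply: (mulIf psix0); apply: (addrI (phi x)); rewrite Ec Ec'.
exact: sigma_finite_disjoint_family_negligible mE E_disj mu_sf (@real_not_countable R).
Qed.

Lemma sum_invX2_le (R : numFieldType) (n m : nat) :
  \sum_(n <= k < m) (2 : R) ^- k <= 2 * 2 ^- n.
Proof.
have bound_ge0 k : (0 : R) <= 2 * 2 ^- k.
  by rewrite mulr_ge0 // invr_ge0 exprn_ge0.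
case: (leqP n m) => [le_nm|lt_mn]; last by rewrite big_geq // ltnW.
rewrite (telescope_sumr_eq (fun k => - (2 * 2 ^- k))) // => [|k _].
  by rewrite opprK gerDr oppr_le0.
by rewrite opprK exprS invfM mulrA divff ?pnatr_eq0 // mul1r mulr_natl mulr2n addKr.
Qed.

Lemma exists_invX2_lt (R : archiRealFieldType) (e : R) :
  0 < e -> exists N, forall n, (N <= n)%N -> 2 * 2 ^- n < e.
Proof.
move=> e_gt0; exists (Num.bound (2 / e)) => n le_Nn.
rewrite ltr_pdivrMr ?exprn_gt0 // mulrC -ltr_pdivrMr //.
have two_div_ge0 : 0 <= 2 / e by rewrite divr_ge0 // ltW.
apply: lt_le_trans (archi_boundP two_div_ge0) _.
by rewrite -natrX ler_nat (leq_trans le_Nn) // ltnW // ltn_expl.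
Qed.

Lemma abs_sums_bounded_eventually_const_eq0 (R : archiRealFieldType)
    (a : nat -> R) (b M : R) (m : nat) :
  (forall K, \sum_(0 <= k < K) `|a k| <= M) -> (forall k, (m <= k)%N -> a k = b) ->
  b = 0.
Proof.
move=> sum_le a_eq; have [//|b_neq0] := eqVneq b 0; exfalso.
have M_ge0 : 0 <= M by have := sum_le 0%N; rewrite big_geq.
have b_gt0 : 0 < `|b| by rewrite normr_gt0.
pose B := Num.bound (M / `|b|).
have := sum_le (m + B)%N; rewrite leNgt => /negP; apply.
rewrite (big_cat_nat (leq0n m) (leq_addr B m)) /=.
apply: ltr_wpDl; first by apply: sumr_ge0 => k _.
rewrite (eq_big_nat _ _ (F2 := fun _ => `|b|)) => [|k /andP[le_mk _]]; last by rewrite a_eq.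
rewrite sumr_const_nat addKn -mulr_natr mulrC -ltr_pdivrMr //.
exact: archi_boundP (divr_ge0 M_ge0 (ltW b_gt0)).
Qed.

Section banach_function_lattice.
Context d (Om : measurableType d) (R : realType) (mu : {measure set Om -> \bar R}).
Context (X : set (Om -> R)) (nrm : (Om -> R) -> R).
Hypothesis HX : BanachFunctionLattice mu X nrm.

Definition nrm_cvg0 (u : nat -> Om -> R) :=
  forall e, 0 < e -> exists N, forall n, (N <= n)%N -> nrm (u n) < e.

Lemma bfl_opp f : X f -> X (fun x => - f x).
Proof.
move=> Xf; have := bfl_scale HX (-1) Xf.
by congr X; apply/funext => x; rewrite mulN1r.
Qed.

Lemma bfl_sub f g : X f -> X g -> X (fun x => f x - g x).
Proof. by move=> Xf Xg; apply: (bfl_add HX Xf); exact: bfl_opp. Qed.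

Lemma bfl_abs f : X f -> X (fun x => `|f x|).
Proof.
move=> Xf; have := bfl_max HX Xf (bfl_opp Xf).
by congr X; apply/funext => x; rewrite maxrN.
Qed.

Lemma bfl_sum (u : nat -> Om -> R) m n : (forall k, X (u k)) ->
  X (fun x => \sum_(m <= k < n) u k x).
Proof.
move=> Xu; rewrite -fct_sumE; apply: (big_ind X) => //.
  exact: (bfl_zero HX).
exact: (bfl_add HX).
Qed.

Lemma bfl_nrm0 : nrm (fun _ => 0) = 0.
Proof. by apply/(bfl_nrm_def HX (bfl_zero HX)); exact: aeW. Qed.

Lemma bfl_nrm_ge0 f : X f -> 0 <= nrm f.
Proof.
move=> Xf; have := bfl_nrm_triangle HX Xf (bfl_scale HX (-1) Xf).
rewrite (bfl_nrm_scale HX _ Xf) normrN normr1 mul1r.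
have -> : (fun x => f x + -1 * f x) = (fun _ => 0).
  by apply/funext => x; rewrite mulN1r subrr.
by rewrite bfl_nrm0 -mulr2n -mulr_natr pmulr_lge0.
Qed.

Lemma bfl_nrm_subC f g : X f -> X g ->
  nrm (fun x => f x - g x) = nrm (fun x => g x - f x).
Proof.
move=> Xf Xg; have := bfl_nrm_scale HX (-1) (bfl_sub Xg Xf).
rewrite normrN normr1 mul1r => <-.
by congr nrm; apply/funext => x; rewrite mulN1r opprB.
Qed.

Lemma bfl_nrm_abs f : X f -> nrm (fun x => `|f x|) = nrm f.
Proof.
move=> Xf; have Xabsf := bfl_abs Xf.
by apply/eqP; rewrite eq_le !(bfl_nrm_lattice HX) //; apply: aeW => x; rewrite normr_id.
Qed.

Lemma bfl_nrm_sum (u : nat -> Om -> R) m n : (forall k, X (u k)) ->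
  nrm (fun x => \sum_(m <= k < n) u k x) <= \sum_(m <= k < n) nrm (u k).
Proof.
move=> Xu; rewrite -fct_sumE.
suff [] : X (\sum_(m <= k < n) u k) /\
    nrm (\sum_(m <= k < n) u k) <= \sum_(m <= k < n) nrm (u k) by [].
apply: (big_ind2 (fun f r => X f /\ nrm f <= r)).
- by split; [exact: (bfl_zero HX) | rewrite bfl_nrm0].
- move=> f r g s [Xf le_fr] [Xg le_gs]; split; first exact: (bfl_add HX).
  exact: le_trans (bfl_nrm_triangle HX Xf Xg) (lerD le_fr le_gs).
- by move=> k _; split.
Qed.

Lemma bfl_series_cvg (u : nat -> Om -> R) : (forall k, X (u k)) ->
  (forall k, nrm (u k) <= 2 ^- k) ->
  exists2 F, X F & nrm_cvg0 (fun n x => \sum_(0 <= k < n) u k x - F x).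
Proof.
move=> Xu nrm_u.
have XS n : X (fun x => \sum_(0 <= k < n) u k x) by exact: bfl_sum.
have nrm_tail n m : (n <= m)%N ->
    nrm (fun x => \sum_(0 <= k < m) u k x - \sum_(0 <= k < n) u k x) <= 2 * 2 ^- n.
  move=> le_nm.
  have -> : (fun x => \sum_(0 <= k < m) u k x - \sum_(0 <= k < n) u k x) =
      (fun x => \sum_(n <= k < m) u k x).
    by apply/funext => x; rewrite (big_cat_nat (leq0n n) le_nm) /= addrAC subrr add0r.
  apply: le_trans (bfl_nrm_sum n m Xu) _.
  by apply: le_trans (sum_invX2_le R n m); apply: ler_sum => k _.
apply: (bfl_complete HX XS) => e e_gt0.
have [N HN] := exists_invX2_lt e_gt0.
exists N => m n le_Nm le_Nn.
have [le_nm|lt_mn] := leqP n m.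
  exact: le_lt_trans (nrm_tail _ _ le_nm) (HN _ le_Nn).
rewrite bfl_nrm_subC //.
exact: le_lt_trans (nrm_tail _ _ (ltnW lt_mn)) (HN _ le_Nm).
Qed.

Lemma bfl_abs_series_bounded_ae (u : nat -> Om -> R) : (forall k, X (u k)) ->
  (forall k, nrm (u k) <= 2 ^- k) ->
  {ae mu, forall x, exists M, forall n, \sum_(0 <= k < n) `|u k x| <= M}.
Proof.
move=> Xu nrm_u.
have Xabs_u k : X (fun x => `|u k x|) by exact: bfl_abs.
have nrm_abs_u k : nrm (fun x => `|u k x|) <= 2 ^- k by rewrite bfl_nrm_abs.
have [F XF SF] := bfl_series_cvg Xabs_u nrm_abs_u.
pose S n x := \sum_(0 <= k < n) `|u k x|.
have XS n : X (S n) by exact: bfl_sum.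
have S_le_F n : {ae mu, forall x, S n x <= F x}.
  (* The positive part of S n - F is dominated by |S m - F| for all m >= n. *)
  pose P x := Num.max (S n x - F x) 0.
  have XP : X P by apply: (bfl_max HX); [exact: bfl_sub | exact: (bfl_zero HX)].
  have nrmP0 : nrm P = 0.
    apply/eqP; rewrite eq_le bfl_nrm_ge0 // andbT leNgt; apply/negP => nrmP_gt0.
    have [N HN] := SF _ nrmP_gt0.
    have := HN (maxn n N) (leq_maxr n N); apply/negP; rewrite -leNgt.
    apply: (bfl_nrm_lattice HX XP (bfl_sub (XS _) XF)); apply: aeW => x.
    rewrite ger0_norm ?le_max ?lexx ?orbT // ge_max normr_ge0 andbT.
    apply: le_trans (ler_norm _); rewrite lerD2r /S.
    rewrite (big_cat_nat (leq0n n) (leq_maxl n N)) /= lerDl.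
    by apply: sumr_ge0 => k _.
  have := (bfl_nrm_def HX XP).1 nrmP0.
  apply: filterS => x /(_ I) Px0.
  by rewrite -subr_le0 -Px0 le_max lexx.
by apply: filterS (ae_foralln S_le_F) => x S_le_Fx; exists (F x).
Qed.

Lemma bfl_nrm_cvg0_eventually_const_eq0 (v : nat -> Om -> R) :
  (forall n, X (v n)) -> nrm_cvg0 v ->
  {ae mu, forall x b, (exists m, forall n, (m <= n)%N -> v n x = b) -> b = 0}.
Proof.
move=> Xv v_cvg0.
have pow2V_gt0 k : 0 < (2 : R) ^- k by rewrite invr_gt0 exprn_gt0.
have subseq_ex k : exists n, (k <= n)%N /\ nrm (v n) <= 2 ^- k.
  have [N HN] := v_cvg0 (2 ^- k) (pow2V_gt0 k).
  by exists (maxn N k); split; [exact: leq_maxr | exact/ltW/HN/leq_maxl].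
have [nk nk_spec] := choice subseq_ex.
have := bfl_abs_series_bounded_ae (fun k => Xv (nk k)) (fun k => (nk_spec k).2).
apply: filterS => x [M HM] b [m v_eq].
apply: (abs_sums_bounded_eventually_const_eq0 HM (m := m)) => k le_mk.
by apply: v_eq; exact: leq_trans le_mk (nk_spec k).1.
Qed.

Lemma bfl_rescale_geometric (f : nat -> Om -> R) : (forall j, X (f j)) ->
  exists2 c : nat -> R, (forall j, 0 < c j) & forall j, nrm (fun x => c j * f j x) <= 2 ^- j.
Proof.
move=> Xf; pose c j := (2 ^+ j * (1 + nrm (f j)))^-1.
have nrm1_gt0 j : 0 < 1 + nrm (f j) by exact: ltr_wpDr (bfl_nrm_ge0 (Xf j)) ltr01.
have c_gt0 j : 0 < c j by rewrite invr_gt0 mulr_gt0 // exprn_gt0.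
exists c => // j; rewrite (bfl_nrm_scale HX _ (Xf j)) gtr0_norm // /c invfM -mulrA.
rewrite ler_piMr // ?invr_ge0 ?exprn_ge0 //.
by rewrite mulrC ler_pdivrMr // mul1r lerDr ler01.
Qed.

End banach_function_lattice.

Section support.
Context d (T : measurableType d) (R : realType) (mu : {measure set T -> \bar R}).

Lemma is_suppP (f : T -> R) (A : set T) :
  is_supp mu f A <-> {ae mu, forall x, A x <-> f x != 0}.
Proof.
rewrite /is_supp /ae_set_eq.
suff -> : (A `\` [set x | f x != 0]) `|` ([set x | f x != 0] `\` A) =
  ~` [set x | A x <-> f x != 0] by [].
apply/seteqP; split => x /=.
- by case=> [[Ax fx0] | [fx0 Ax]] [AfP fAP]; [apply: fx0; exact: AfP | apply: Ax; exact: fAP].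
- move=> not_iff; have [Ax|Ax] := pselect (A x).
    by left; split => // fx0; apply: not_iff; split.
  by right; split => //; apply: contrapT => fx0; apply: not_iff; split.
Qed.

Lemma ae_disjoint_family (A : nat -> set T) :
  (forall i j, i <> j -> ae_disjoint mu (A i) (A j)) ->
  {ae mu, forall x i j, A i x -> A j x -> i = j}.
Proof.
move=> A_disj; apply: ae_foralln => i; apply: ae_foralln => j.
have [->|neq_ij] := eqVneq i j; first exact: aeW.
apply: negligibleS (A_disj i j (elimN eqP neq_ij)) => x /= not_imp.
apply: contrapT => not_both; apply: not_imp => Ai Aj.
by case: not_both; split.
Qed.

End support.

Section bounded_linear_op.
Context d (Om : measurableType d) (R : realType) (mu : {measure set Om -> \bar R}).
Context (X : set (Om -> R)) (nrm : (Om -> R) -> R) (Op : (Om -> R) -> (Om -> R)).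
Hypothesis HX : BanachFunctionLattice mu X nrm.
Hypothesis HT : bounded_linear_op mu X nrm Op.

Lemma op_closed f : X f -> X (Op f).
Proof. by case: HT => + _ _ _ _; apply. Qed.

Lemma opD f g : X f -> X g ->
  {ae mu, forall x, Op (fun x => f x + g x) x = Op f x + Op g x}.
Proof. by case: HT => _ _ + _ _ Xf Xg => /(_ f g Xf Xg); apply: filterS => x; apply. Qed.

Lemma opZ (a : R) f : X f -> {ae mu, forall x, Op (fun x => a * f x) x = a * Op f x}.
Proof. by case: HT => _ _ _ + _ Xf => /(_ a f Xf); apply: filterS => x; apply. Qed.

Lemma op0 : {ae mu, forall x, Op (fun _ => 0) x = 0}.
Proof.
apply: filterS (opZ 0 (bfl_zero HX)) => x.
have -> : (fun _ => 0 * 0) = (fun _ => 0) :> (Om -> R) by apply/funext => y; rewrite mul0r.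
by rewrite mul0r.
Qed.

Lemma opB f g : X f -> X g ->
  {ae mu, forall x, Op (fun x => f x - g x) x = Op f x - Op g x}.
Proof.
move=> Xf Xg; have Xg' : X (fun x => -1 * g x) by exact: (bfl_scale HX).
have -> : (fun x => f x - g x) = (fun x => f x + -1 * g x).
  by apply/funext => x; rewrite mulN1r.
near=> x.
by rewrite (near (opD Xf Xg') x) // (near (opZ (-1) Xg) x) // mulN1r.
Unshelve. all: by end_near.
Qed.

Lemma op_sum (g : nat -> Om -> R) n : (forall j, X (g j)) ->
  {ae mu, forall x, Op (fun x => \sum_(0 <= j < n) g j x) x = \sum_(0 <= j < n) Op (g j) x}.
Proof.
move=> Xg; elim: n => [|n IH].
  have -> : (fun x => \sum_(0 <= j < 0) g j x) = (fun _ => 0) by apply/funext => x; rewrite big_geq.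
  by apply: filterS op0 => x ->; rewrite big_geq.
have -> : (fun x => \sum_(0 <= j < n.+1) g j x) =
    (fun x => \sum_(0 <= j < n) g j x + g n x).
  by apply/funext => x; rewrite big_nat_recr.
near=> x.
by rewrite (near (opD (bfl_sum HX 0 n Xg) (Xg n)) x) // (near IH x) // big_nat_recr.
Unshelve. all: by end_near.
Qed.

Lemma op_nrm_cvg0 (u : nat -> Om -> R) : (forall n, X (u n)) ->
  nrm_cvg0 nrm u -> nrm_cvg0 nrm (fun n => Op (u n)).
Proof.
move=> Xu u_cvg0 e e_gt0.
have [C nrm_Op] : exists C, forall f, X f -> nrm (Op f) <= C * nrm f by case: HT.
have C1_gt0 : 0 < `|C| + 1 by rewrite ltr_wpDl.
have [N HN] := u_cvg0 (e / (`|C| + 1)) (divr_gt0 e_gt0 C1_gt0).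
exists N => n le_Nn; apply: le_lt_trans (nrm_Op _ (Xu n)) _.
have C_le : C <= `|C| + 1 by rewrite (le_trans (ler_norm C)) // lerDl.
apply: le_lt_trans (ler_wpM2r (bfl_nrm_ge0 HX (Xu n)) C_le) _.
by rewrite -ltr_pdivlMl // mulrC HN.
Qed.

Lemma op_series_remainder (c : nat -> R) (f : nat -> Om -> R) (h : Om -> R) :
  X h -> (forall j, X (f j)) ->
  {ae mu, forall x n, Op (fun x => h x - \sum_(0 <= j < n) c j * f j x) x =
                      Op h x - \sum_(0 <= j < n) c j * Op (f j) x}.
Proof.
move=> Xh Xf; have Xcf j : X (fun x => c j * f j x) by exact: (bfl_scale HX).
near=> x => n.
have op_sumx : Op (fun x => \sum_(0 <= j < n) c j * f j x) x =
    \sum_(0 <= j < n) Op (fun x => c j * f j x) x.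
  exact: (near (ae_foralln (fun n => op_sum n Xcf)) x).
rewrite (near (ae_foralln (fun n => opB Xh (bfl_sum HX 0 n Xcf))) x) //= op_sumx.
congr (_ - _); apply: eq_bigr => j _.
exact: (near (ae_foralln (fun j => opZ (c j) (Xf j))) x).
Unshelve. all: by end_near.
Qed.

Lemma SigmaT_setU : sigma_finite setT mu -> forall A B,
  SigmaT mu X Op A -> SigmaT mu X Op B -> SigmaT mu X Op (A `|` B).
Proof.
move=> mu_sf A B [f Xf /is_suppP suppA] [g Xg /is_suppP suppB].
have [c no_cancel] := exists_negligible_cancellation mu_sf
  (bfl_meas HX (op_closed Xf)) (bfl_meas HX (op_closed Xg)).
have Xcg : X (fun x => c * g x) by exact: (bfl_scale HX).
exists (fun x => f x + c * g x); first exact: (bfl_add HX).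
have no_cancel_ae : {ae mu, forall x, ~ (Op g x != 0 /\ Op f x + c * Op g x = 0)}.
  by apply: negligibleS no_cancel => x /= /contrapT.
apply/is_suppP; near=> x.
have Afx : A x <-> Op f x != 0 by exact: (near suppA x).
have Bgx : B x <-> Op g x != 0 by exact: (near suppB x).
have no_cancelx : ~ (Op g x != 0 /\ Op f x + c * Op g x = 0) by exact: (near no_cancel_ae x).
rewrite (near (opD Xf Xcg) x) // (near (opZ c Xg) x) //.
split => [ABx|].
  apply/negP => /eqP sum0.
  have gx0 : Op g x = 0 by apply/eqP/negPn/negP => gx0; apply: no_cancelx; split.
  have fx0 : Op f x = 0 by rewrite -sum0 gx0 mulr0 addr0.
  by case: ABx => [/Afx|/Bgx]; rewrite ?fx0 ?gx0 eqxx.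
have [fx0|/Afx Ax _] := eqVneq (Op f x) 0; last by left.
by rewrite fx0 add0r mulf_eq0 negb_or => /andP[_ /Bgx Bx]; right.
Unshelve. all: by end_near.
Qed.

Lemma SigmaT_bigcup (A : nat -> set Om) :
  (forall j, SigmaT mu X Op (A j)) ->
  (forall i j, i <> j -> ae_disjoint mu (A i) (A j)) ->
  SigmaT mu X Op (\bigcup_j A j).
Proof.
move=> A_sigma A_disj.
have fP j : exists f, X f /\ is_supp mu (Op f) (A j) by have [f ? ?] := A_sigma j; exists f.
have [f f_spec] := choice fP.
have Xf j : X (f j) by case: (f_spec j).
have suppf j : {ae mu, forall x, A j x <-> Op (f j) x != 0} by apply/is_suppP; case: (f_spec j).
have [c c_gt0 nrm_cf] := bfl_rescale_geometric HX Xf.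
have Xcf j : X (fun x => c j * f j x) by exact: (bfl_scale HX).
have [h Xh h_cvg] := bfl_series_cvg HX Xcf nrm_cf.
pose v n := Op (fun x => h x - \sum_(0 <= j < n) c j * f j x).
have XS n : X (fun x => \sum_(0 <= j < n) c j * f j x) by exact: (bfl_sum HX).
have Xv n : X (v n) by apply: op_closed; exact: (bfl_sub HX).
have v_cvg0 : nrm_cvg0 nrm v.
  apply: op_nrm_cvg0 => [n|e /h_cvg[N HN]]; first exact: (bfl_sub HX).
  by exists N => n /HN; rewrite (bfl_nrm_subC HX).
exists h => //; apply/is_suppP; near=> x.
have suppx j : A j x <-> Op (f j) x != 0 by exact: (near (ae_foralln suppf) x).
have disjx i j : A i x -> A j x -> i = j by exact: (near (ae_disjoint_family A_disj) x).
have vE n : v n x = Op h x - \sum_(0 <= j < n) c j * Op (f j) x.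
  exact: (near (op_series_remainder c Xh Xf) x).
have v_lim b : (exists m, forall n, (m <= n)%N -> v n x = b) -> b = 0.
  exact: (near (bfl_nrm_cvg0_eventually_const_eq0 HX Xv v_cvg0) x).
have Opf0 j : ~ A j x -> Op (f j) x = 0 by move=> nAj; apply/eqP/negPn/negP => /(suppx j).2.
have [[k _ Akx]|noA] := pselect ((\bigcup_j A j) x).
  have vk n : (k < n)%N -> v n x = Op h x - c k * Op (f k) x.
    move=> lt_kn; rewrite vE (bigD1_seq k) ?mem_index_iota ?iota_uniq //= big1 ?addr0 //.
    by move=> j /eqP neq_jk; rewrite Opf0 ?mulr0 // => /(disjx _ _ ^~ Akx).
  have /eqP := v_lim _ (ex_intro _ k.+1 vk); rewrite subr_eq0 => /eqP ->.
  split=> _; last by exists k.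
  by apply: mulf_neq0; [exact: lt0r_neq0 | exact/(suppx k).1].
have vh n : v n x = Op h x.
  by rewrite vE big1 ?subr0 // => j _; rewrite Opf0 ?mulr0 // => Ajx; apply: noA; exists j.
by rewrite (v_lim _ (ex_intro _ 0%N (fun n _ => vh n))) eqxx; split.
Unshelve. all: by end_near.
Qed.

End bounded_linear_op.

Theorem lemma4p1 (d : measure_display) (Om : measurableType d) (R : realType)
  (mu : {measure set Om -> \bar R}) (X : set (Om -> R)) (nrm : (Om -> R) -> R)
  (Op : (Om -> R) -> (Om -> R)) :
  sigma_finite setT mu ->
  BanachFunctionLattice mu X nrm ->
  bounded_linear_op mu X nrm Op ->
  (forall A B, SigmaT mu X Op A -> SigmaT mu X Op B -> SigmaT mu X Op (A `|` B)) /\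
  (forall A : nat -> set Om, (forall j, SigmaT mu X Op (A j)) ->
     (forall i j, i <> j -> ae_disjoint mu (A i) (A j)) ->
     SigmaT mu X Op (\bigcup_j A j)).
Proof.
move=> mu_sf HX HT; split; first exact: (SigmaT_setU HX HT mu_sf).
exact: (SigmaT_bigcup HX HT).
Qed.
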